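(* Let $\Omega_x,\Omega_y\subset\mathbb{R}$ be bounded domains, $\Omega=\Omega_x\times\Omega_y$, $f\in L^2(\Omega)$, and $g\in H^1_0(\Omega)$ the solution of $-\Delta g=f$ in $\Omega$, $g=0$ on $\partial\Omega$. Consider the Pure Greedy Algorithm described in the context and let $n\ge1$. Then the minimizer $(r_n,s_n)$ at iteration $n$ satisfies, for all $(r,s)\in H^1_0(\Omega_x)\times H^1_0(\Omega_y)$, $$\frac12\int_\Omega|\nabla(r\otimes s_n+r_n\otimes s)|^2+\int_\Omega\nabla(r_n\otimes s_n)\cdot\nabla(r\otimes s)-\int_\Omega f_{n-1}\,r\otimes s\ge0,$$ and this condition is equivalent to: for all $(r,s)\in H^1_0(\Omega_x)\times H^1_0(\Omega_y)$, $$\Big(\int_\Omega\nabla(r_n\otimes s_n-g_n)\cdot\nabla(r\otimes s)\Big)^2\le\int_\Omega|\nabla(r\otimes s_n)|^2\int_\Omega|\nabla(r_n\otimes s)|^2.$$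
   Context: Notation: $(r\otimes s)(x,y)=r(x)s(y)$. For $h\in H^{-1}(\Omega)$, $\int_\Omega h\,u$ denotes the duality pairing with $u\in H^1_0(\Omega)$. Pure Greedy Algorithm: $f_0=f$; at iteration $n\ge1$, $(r_n,s_n)$ is a minimizer over $H^1_0(\Omega_x)\times H^1_0(\Omega_y)$ of $(r,s)\mapsto\frac12\int_\Omega|\nabla(r\otimes s)|^2-\int_\Omega f_{n-1}\,r\otimes s$, and $f_n=f_{n-1}+\Delta(r_n\otimes s_n)$. Set $g_n=g-\sum_{k=1}^n r_k\otimes s_k$. *)

From HB Require Import structures.
From mathcomp Require Import all_boot all_order all_algebra.
From mathcomp Require Import all_classical all_reals all_analysis.
Set Implicit Arguments. Unset Strict Implicit. Unset Printing Implicit Defensive.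
Import Order.TTheory GRing.Theory Num.Theory.
Import numFieldNormedType.Exports.
Local Open Scope classical_set_scope.
Local Open Scope ring_scope.

Section Greedy.
Variable R : realType.

Definition leb := (@lebesgue_measure R).
Definition leb2 := (leb \x leb)%E.

Definition Om (a b c d : R) : set (R * R) := `]a, b[ `*` `]c, d[.

Definition I1 (a b : R) (u : R -> R) : R :=
  fine (\int[leb]_(x in `]a, b[) (u x)%:E)%E.
Definition I2 (a b c d : R) (u : R * R -> R) : R :=
  fine (\int[leb2]_(p in Om a b c d) (u p)%:E)%E.

Definition L2_1 (a b : R) (u : R -> R) : Prop :=
  measurable_fun `]a, b[ u /\
  leb.-integrable `]a, b[ (fun x => (u x ^+ 2)%:E).
Definition L2_2 (a b c d : R) (u : R * R -> R) : Prop :=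
  measurable_fun (Om a b c d) u /\
  leb2.-integrable (Om a b c d) (fun p => (u p ^+ 2)%:E).

Definition test1 (a b : R) (phi : R -> R) : Prop :=
  (forall x, derivable phi x 1) /\ continuous phi /\ continuous (derive1 phi) /\
  exists2 e : R, 0 < e & forall x, ~ (a + e <= x <= b - e) -> phi x = 0.

Definition dx (phi : R * R -> R) : R * R -> R :=
  fun p => derive1 (fun t => phi (t, p.2)) p.1.
Definition dy (phi : R * R -> R) : R * R -> R :=
  fun p => derive1 (fun t => phi (p.1, t)) p.2.

Definition test2 (a b c d : R) (phi : R * R -> R) : Prop :=
  (forall p, derivable (fun t => phi (t, p.2)) p.1 1) /\
  (forall p, derivable (fun t => phi (p.1, t)) p.2 1) /\
  continuous phi /\ continuous (dx phi) /\ continuous (dy phi) /\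
  exists2 e : R, 0 < e & forall p,
    ~ ((a + e <= p.1 <= b - e) /\ (c + e <= p.2 <= d - e)) -> phi p = 0.

(* H^1_0(]a,b[): u in L^2 with (weak) derivative du in L^2, obtained as an
   H^1-limit of compactly supported C^1 functions (closure definition). *)
Definition H10_1 (a b : R) (u du : R -> R) : Prop :=
  L2_1 a b u /\ L2_1 a b du /\
  exists phi : nat -> R -> R, (forall k, test1 a b (phi k)) /\
    ((fun k => \int[leb]_(x in `]a, b[) ((phi k x - u x) ^+ 2)%:E)%E
       @ \oo --> 0%E) /\
    ((fun k => \int[leb]_(x in `]a, b[) ((derive1 (phi k) x - du x) ^+ 2)%:E)%E
       @ \oo --> 0%E).

Definition grad := ((R * R -> R) * (R * R -> R))%type.

(* H^1_0(Omega): u with weak gradient G, H^1-limit of test functions. *)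
Definition H10_2 (a b c d : R) (u : R * R -> R) (G : grad) : Prop :=
  L2_2 a b c d u /\ L2_2 a b c d G.1 /\ L2_2 a b c d G.2 /\
  exists phi : nat -> R * R -> R, (forall k, test2 a b c d (phi k)) /\
    ((fun k => \int[leb2]_(p in Om a b c d) ((phi k p - u p) ^+ 2)%:E)%E
       @ \oo --> 0%E) /\
    ((fun k => \int[leb2]_(p in Om a b c d) ((dx (phi k) p - G.1 p) ^+ 2)%:E)%E
       @ \oo --> 0%E) /\
    ((fun k => \int[leb2]_(p in Om a b c d) ((dy (phi k) p - G.2 p) ^+ 2)%:E)%E
       @ \oo --> 0%E).

Definition tens (r s : R -> R) : R * R -> R := fun p => r p.1 * s p.2.
Definition gtens (r dr s ds : R -> R) : grad := (tens dr s, tens r ds).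

Definition gadd (G H : grad) : grad := (G.1 \+ H.1, G.2 \+ H.2).
Definition gsub (G H : grad) : grad := (G.1 \- H.1, G.2 \- H.2).

Definition dirichlet (a b c d : R) (G H : grad) : R :=
  I2 a b c d (fun p => G.1 p * H.1 p + G.2 p * H.2 p).
Definition dnorm2 (a b c d : R) (G : grad) : R := dirichlet a b c d G G.

(* The iterates: r k, s k with derivatives dr k, ds k (k >= 1). *)
(* Duality pairing <f_n, v> for v in H^1_0(Omega) with gradient Gv, where
   f_0 = f and f_n = f_{n-1} + Delta(r_n (x) s_n), i.e.
   <Delta w, v> = - int grad w . grad v. *)
Definition fpair (a b c d : R) (f : R * R -> R) (r dr s ds : nat -> R -> R)
  (n : nat) (v : R * R -> R) (Gv : grad) : R :=
  I2 a b c d (fun p => f p * v p)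
  - \sum_(1 <= k < n.+1) dirichlet a b c d (gtens (r k) (dr k) (s k) (ds k)) Gv.

Definition grad_gn (G : grad) (r dr s ds : nat -> R -> R) (n : nat) : grad :=
  (fun p => G.1 p - \sum_(1 <= k < n.+1) (gtens (r k) (dr k) (s k) (ds k)).1 p,
   fun p => G.2 p - \sum_(1 <= k < n.+1) (gtens (r k) (dr k) (s k) (ds k)).2 p).

(* functional minimized at iteration n:
   J_n(r,s) = 1/2 int |grad (r (x) s)|^2 - <f_{n-1}, r (x) s> *)
Definition Jn (a b c d : R) (f : R * R -> R) (rr drr ss dss : nat -> R -> R)
  (n : nat) (r dr s ds : R -> R) : R :=
  2^-1 * dnorm2 a b c d (gtens r dr s ds)
  - fpair a b c d f rr drr ss dss n.-1 (tens r s) (gtens r dr s ds).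

End Greedy.

From HB Require Import structures.
From mathcomp Require Import all_boot all_order all_algebra.
From mathcomp Require Import all_classical all_reals all_analysis.
From mathcomp Require Import lra ring.
Import Order.TTheory GRing.Theory Num.Theory.
Import numFieldNormedType.Exports.
Import measurable_realfun.
Set Implicit Arguments. Unset Strict Implicit. Unset Printing Implicit Defensive.
Local Open Scope classical_set_scope.
Local Open Scope ring_scope.

(* By the weak formulation of [-Delta g = f], the residual [f_(n-1)] pairs with
   [v] as [grad g_(n-1)] pairs with [grad v], so [(r_n, s_n)] minimizes the energy
   [E(w) = 1/2 |grad w|^2 - <grad g_(n-1), grad w>] over tensor products [w = r (x) s].
   Along [(r_n + t r) (x) (s_n + t s) = r_n (x) s_n + t (r (x) s_n + r_n (x) s) + t^2 r (x) s]
   the energy is a quartic in [t] whose even part is [2 t^2 Phi + t^4 |grad (r (x) s)|^2];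
   minimality makes it nonnegative, which forces [Phi >= 0]: the first condition.
   Since [g_n = g_(n-1) - r_n (x) s_n] and
   [<grad (r (x) s_n), grad (r_n (x) s)> = <grad (r_n (x) s_n), grad (r (x) s)>],
   [Phi = 1/2 |grad (r (x) s_n)|^2 + 1/2 |grad (r_n (x) s)|^2 + <grad (r_n (x) s_n - g_n), grad (r (x) s)>].
   Replacing [r] by [l r] turns this into a quadratic in [l], nonnegative for all [l]
   exactly when its discriminant is nonpositive: the second condition.
   That tensor products of [H^1_0] functions lie in [H^1_0] follows from Tonelli, by
   tensoring the approximating test functions. *)

Section square_integrable.
Context {d : measure_display} {T : measurableType d} {R : realType}.
Variables (mu : {measure set T -> \bar R}) (D : set T).
Hypothesis mD : measurable D.

Definition square_integrable (F : T -> R) :=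
  measurable_fun D F /\ mu.-integrable D (fun x => (F x ^+ 2)%:E).

Definition sqdist (F H : T -> R) := (\int[mu]_(x in D) ((F x - H x) ^+ 2)%:E)%E.

Lemma measurable_sqr (F : T -> R) :
  measurable_fun D F -> measurable_fun D (fun x => (F x ^+ 2)%:E).
Proof. by move=> mF; apply/measurable_EFinP; exact: measurable_funX. Qed.

Lemma sqdist_ge0 (F H : T -> R) : (0 <= sqdist F H)%E.
Proof. by apply: integral_ge0 => x _; rewrite lee_fin sqr_ge0. Qed.

Lemma square_integrable_integrableM F H : square_integrable F -> square_integrable H ->
  mu.-integrable D (fun x => (F x * H x)%:E).
Proof.
move=> [mF iF] [mH iH].
apply: (le_integrable mD _ _ (integrableD mD iF iH)).
  by apply/measurable_EFinP; exact: measurable_funM.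
move=> x _ /=; rewrite lee_fin [X in _ <= X]ger0_norm ?addr_ge0 ?sqr_ge0 //.
have := sqr_ge0 (F x - H x); have := sqr_ge0 (F x + H x).
by rewrite ler_norml; move=> ? ?; apply/andP; split; nra.
Qed.

Lemma square_integrableD F H : square_integrable F -> square_integrable H ->
  square_integrable (fun x => F x + H x).
Proof.
move=> [mF iF] [mH iH]; split; first exact: measurable_funD.
apply: (le_integrable mD _ _
  (integrableD mD (integrableZl mD 2 iF) (integrableZl mD 2 iH))).
  by apply: measurable_sqr; exact: measurable_funD.
move=> x _ /=; rewrite lee_fin !ger0_norm ?sqr_ge0 //; last first.
  by rewrite addr_ge0 // mulr_ge0 // sqr_ge0.
by have := sqr_ge0 (F x - H x); rewrite sqrrB sqrrD; nra.
Qed.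

Lemma square_integrableZ k F : square_integrable F ->
  square_integrable (fun x => k * F x).
Proof.
move=> [mF iF]; split; first exact: measurable_funM.
apply: eq_integrable (integrableZl mD (k ^+ 2) iF) => // x _ /=.
by rewrite -EFinM exprMn.
Qed.

Lemma square_integrableB F H : square_integrable F -> square_integrable H ->
  square_integrable (fun x => F x - H x).
Proof.
move=> hF /(square_integrableZ (-1)) hH.
by under eq_fun do rewrite -mulN1r; exact: square_integrableD.
Qed.

Lemma square_integrable_sum (I : eqType) (s : seq I) (F : I -> T -> R) :
  {in s, forall i, square_integrable (F i)} ->
  square_integrable (fun x => \sum_(i <- s) F i x).
Proof.
elim: s => [_|i s IH hF].
  under [X in square_integrable X]eq_fun do rewrite big_nil.
  split; first exact: measurable_cst.
  by apply: eq_integrable (integrable0 mu D) => // x _; rewrite expr0n.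
under [X in square_integrable X]eq_fun do rewrite big_cons.
apply: square_integrableD; first by apply: hF; rewrite mem_head.
by apply: IH => j js; apply: hF; rewrite in_cons js orbT.
Qed.

Lemma integrable_sum_EFin (I : eqType) (s : seq I) (F : I -> T -> R) :
  {in s, forall i, mu.-integrable D (EFin \o F i)} ->
  mu.-integrable D (fun x => (\sum_(i <- s) F i x)%:E).
Proof.
move=> iF; apply: (eq_integrable mD (fun x => \sum_(i <- s | i \in s) (F i x)%:E)).
  by move=> x _; rewrite sumEFin -big_seq.
exact: integrable_sum.
Qed.

Lemma Rintegral_sum (I : eqType) (s : seq I) (F : I -> T -> R) :
  {in s, forall i, mu.-integrable D (EFin \o F i)} ->
  Rintegral mu D (fun x => \sum_(i <- s) F i x) = \sum_(i <- s) Rintegral mu D (F i).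
Proof.
elim: s => [_|i s IH iF].
  under eq_Rintegral do rewrite big_nil.
  by rewrite big_nil Rintegral_cst // mul0r.
have iFs : {in s, forall j, mu.-integrable D (EFin \o F j)}.
  by move=> j js; apply: iF; rewrite in_cons js orbT.
under eq_Rintegral do rewrite big_cons.
rewrite big_cons RintegralD ?IH //; first by apply: iF; rewrite mem_head.
exact: integrable_sum_EFin.
Qed.

Lemma integral_sqr_le_sqdist (F H : T -> R) :
  measurable_fun D F -> measurable_fun D H ->
  (\int[mu]_(x in D) (H x ^+ 2)%:E <=
   2%:E * sqdist H F + 2%:E * \int[mu]_(x in D) (F x ^+ 2)%:E)%E.
Proof.
move=> mF mH; rewrite /sqdist.
have mHF := measurable_sqr (measurable_funB mH mF).
have mF2 := measurable_sqr mF.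
rewrite -!ge0_integralZl // -?ge0_integralD //; first last.
all: try solve [by move=> x _; rewrite ?mule_ge0 // lee_fin sqr_ge0
                | by apply: emeasurable_funM => //; exact: measurable_cst].
apply: ge0_le_integral => //.
- by move=> x _; rewrite lee_fin sqr_ge0.
- exact: measurable_sqr.
- by apply: emeasurable_funD; apply: emeasurable_funM;
    try exact: measurable_cst; try exact: measurable_sqr.
move=> x _; rewrite -!EFinM -EFinD lee_fin.
by have := sqr_ge0 (H x - 2 * F x); nra.
Qed.

Lemma cvg_sqdist_lin (Fk Hk : nat -> T -> R) (F H : T -> R) (al be : R) :
  (forall k, measurable_fun D (Fk k)) -> (forall k, measurable_fun D (Hk k)) ->
  measurable_fun D F -> measurable_fun D H ->
  sqdist^~ F \o Fk @ \oo --> 0%E -> sqdist^~ H \o Hk @ \oo --> 0%E ->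
  (fun k => sqdist (fun x => al * Fk k x + be * Hk k x) (fun x => al * F x + be * H x))
    @ \oo --> 0%E.
Proof.
move=> mFk mHk mF mH cF cH.
have := cvgeZl (y := (2 * al ^+ 2)%:E) isT cF; rewrite mule0 => cF2.
have := cvgeZl (y := (2 * be ^+ 2)%:E) isT cH; rewrite mule0 => cH2.
have := cvgeD (a := 0%E) (b := 0%E) isT cF2 cH2; rewrite adde0 => cFH.
eapply (@squeeze_cvge _ _ _ _ (fun=> 0%E)); [|exact: cvg_cst|exact: cFH].
near=> k; rewrite sqdist_ge0 /=.
have mFkF := measurable_sqr (measurable_funB (mFk k) mF).
have mHkH := measurable_sqr (measurable_funB (mHk k) mH).
rewrite /sqdist -!ge0_integralZl // -?ge0_integralD //; first last.
all: try solve [by move=> x _; rewrite lee_fin sqr_ge0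
                | by move=> x _; rewrite -EFinM lee_fin -mulrA -exprMn mulr_ge0 ?ler0n ?sqr_ge0
                | by rewrite lee_fin mulr_ge0 ?ler0n ?sqr_ge0
                | by apply: emeasurable_funM => //; exact: measurable_cst].
apply: ge0_le_integral => //.
- by move=> x _; rewrite lee_fin sqr_ge0.
- apply: measurable_sqr; apply: measurable_funB; apply: measurable_funD;
    apply: measurable_funM => //; exact: measurable_cst.
- by apply: emeasurable_funD; apply: emeasurable_funM => //; exact: measurable_cst.
move=> x _; rewrite -!EFinM -EFinD lee_fin.
by have := sqr_ge0 (al * (Fk k x - F x) - be * (Hk k x - H x)); nra.
Unshelve. all: by end_near.
Qed.

End square_integrable.

Section tensor_product.
Variables (R : realType) (a b c d : R).
Local Notation leb := (@leb R).
Local Notation leb2 := (@leb2 R).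
Local Notation Om := (Om a b c d).

(* Stated on [measurableTypeR R] so that the sigma-algebra is the one of [leb] and [leb2]. *)
Lemma measurable_Om : measurable (Om : set (measurableTypeR R * measurableTypeR R)).
Proof. exact: measurableX. Qed.

Lemma measurable_itvR (i : interval R) : measurable ([set` i] : set (measurableTypeR R)).
Proof. exact: measurable_itv. Qed.

Lemma measurable_tens (u v : R -> R) :
  measurable_fun `]a, b[ u -> measurable_fun `]c, d[ v -> measurable_fun Om (tens u v).
Proof.
move=> mu mv; apply: measurable_funM.
- apply: (measurable_comp (F := `]a, b[)) => //; first by move=> _ [p [+ _] <-].
  exact: measurable_funS measurable_fst.
- apply: (measurable_comp (F := `]c, d[)) => //; first by move=> _ [p [_ +] <-].
  exact: measurable_funS measurable_snd.
Qed.

Lemma ge0_integral_tens (u v : R -> R) :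
  measurable_fun `]a, b[ u -> measurable_fun `]c, d[ v ->
  (forall x, 0 <= u x) -> (forall y, 0 <= v y) ->
  (\int[leb2]_(p in Om) (tens u v p)%:E =
   \int[leb]_(x in `]a, b[) (u x)%:E * \int[leb]_(y in `]c, d[) (v y)%:E)%E.
Proof.
move=> mu mv u0 v0; rewrite integral_mkcond.
set U := u \_ `]a, b[; set V := v \_ `]c, d[.
have U0 x : 0 <= U x by rewrite /U patchE; case: ifP.
have V0 y : 0 <= V y by rewrite /V patchE; case: ifP.
have mU : measurable_fun setT U.
  by apply/(measurable_restrict u (measurable_itv _) measurableT); rewrite setTI.
have mV : measurable_fun setT V.
  by apply/(measurable_restrict v (measurable_itv _) measurableT); rewrite setTI.
have -> : (fun p => (tens u v p)%:E) \_ Om = (fun p => (U p.1 * V p.2)%:E).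
  apply/funext => p; rewrite /U /V /tens !patchE /Om in_setX.
  by case: (p.1 \in _); case: (p.2 \in _) => //=; rewrite ?mulr0 ?mul0r.
rewrite /leb2 fubini_tonelli1 /=; last 2 first.
- by apply/measurable_EFinP; apply: measurable_funM; exact: measurableT_comp.
- by move=> p; rewrite lee_fin mulr_ge0.
rewrite /fubini_F /=.
under eq_integral => x _.
  under eq_integral => y _ do rewrite EFinM.
  rewrite (ge0_integralZl _ measurableT) //; last 3 first.
  - exact/measurable_EFinP.
  - by move=> y _; rewrite lee_fin.
  - by rewrite lee_fin.
  over.
rewrite /= (ge0_integralZr _ measurableT) //; last 3 first.
- exact/measurable_EFinP.
- by move=> x _; rewrite lee_fin.
- by apply: integral_ge0 => y _; rewrite lee_fin.
rewrite [X in _ = (X * _)%E]integral_mkcond [X in _ = (_ * X)%E]integral_mkcond.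
by congr (_ * _)%E; apply: eq_integral => x _; rewrite /U /V !patchE; case: ifP.
Qed.

Lemma integrable_tens (u v : R -> R) :
  measurable_fun `]a, b[ u -> measurable_fun `]c, d[ v ->
  leb.-integrable `]a, b[ (fun x => (u x)%:E) ->
  leb.-integrable `]c, d[ (fun y => (v y)%:E) ->
  leb2.-integrable Om (fun p => (tens u v p)%:E).
Proof.
move=> mu mv /integrableP[_ iu] /integrableP[_ iv].
apply/integrableP; split; first by apply/measurable_EFinP; exact: measurable_tens.
under eq_integral => p _ do rewrite abse_EFin /tens normrM.
rewrite (@ge0_integral_tens (fun x => `|u x|) (fun y => `|v y|)) //; last 2 first.
- exact: measurableT_comp.
- exact: measurableT_comp.
under eq_integral => x _ do rewrite -abse_EFin.
under [X in (_ * X)%E]eq_integral => y _ do rewrite -abse_EFin.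
apply: lte_mul_pinfty => //; first exact: integral_ge0.
by rewrite ge0_fin_numE //; exact: integral_ge0.
Qed.

Lemma square_integrable_tens (u v : R -> R) :
  L2_1 a b u -> L2_1 c d v -> L2_2 a b c d (tens u v).
Proof.
move=> [mu iu] [mv iv]; split; first exact: measurable_tens.
apply: eq_integrable (integrable_tens (measurable_funX 2 mu) (measurable_funX 2 mv) iu iv).
  exact: measurable_Om.
by move=> p _; rewrite /tens exprMn.
Qed.

Lemma sqdist_tens_le (F G F' G' : R -> R) :
  measurable_fun `]a, b[ F -> measurable_fun `]c, d[ G ->
  measurable_fun `]a, b[ F' -> measurable_fun `]c, d[ G' ->
  (sqdist leb2 Om (tens F' G') (tens F G) <=
   2%:E * sqdist leb `]a, b[ F' F * \int[leb]_(y in `]c, d[) (G' y ^+ 2)%:E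
   + 2%:E * \int[leb]_(x in `]a, b[) (F x ^+ 2)%:E * sqdist leb `]c, d[ G' G)%E.
Proof.
move=> mF mG mF' mG'.
have mFF := measurable_funX 2 (measurable_funB mF' mF).
have mG2 := measurable_funX 2 mG'.
have mF2 := measurable_funX 2 mF.
have mGG := measurable_funX 2 (measurable_funB mG' mG).
have mT u v : measurable_fun `]a, b[ u -> measurable_fun `]c, d[ v ->
    measurable_fun Om (fun p => (tens u v p)%:E).
  by move=> mu mv; apply/measurable_EFinP; exact: measurable_tens.
rewrite /sqdist -!muleA -!ge0_integral_tens //; last 4 first.
- by move=> x; exact: sqr_ge0.
- by move=> x; exact: sqr_ge0.
- by move=> x; exact: sqr_ge0.
- by move=> x; exact: sqr_ge0.
rewrite -!ge0_integralZl // -?ge0_integralD //; first last.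
all: try solve [by move=> p _; rewrite /tens lee_fin mulr_ge0 ?sqr_ge0
              | by move=> p _; rewrite mule_ge0 // lee_fin /tens mulr_ge0 ?sqr_ge0
              | by apply: emeasurable_funM; [exact: measurable_cst|exact: mT]
              | exact: measurable_Om | exact: mT].
apply: ge0_le_integral; first exact: measurable_Om.
- by move=> p _; rewrite lee_fin sqr_ge0.
- apply/measurable_EFinP; apply: measurable_funX; apply: measurable_funB;
    exact: measurable_tens.
- by apply: emeasurable_funD; apply: emeasurable_funM;
    [exact: measurable_cst|exact: mT|exact: measurable_cst|exact: mT].
move=> p _; rewrite -!EFinM -EFinD lee_fin /tens.
set x := F' p.1 - F p.1; set y := G' p.2 - G p.2.
have -> : F' p.1 * G' p.2 - F p.1 * G p.2 = x * G' p.2 + F p.1 * y by rewrite /x /y; ring.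
by have := sqr_ge0 (x * G' p.2 - F p.1 * y); nra.
Qed.

Lemma cvg_sqdist_tens (Fk Gk : nat -> R -> R) (F G : R -> R) :
  (forall k, measurable_fun `]a, b[ (Fk k)) -> (forall k, measurable_fun `]c, d[ (Gk k)) ->
  L2_1 a b F -> L2_1 c d G ->
  sqdist leb `]a, b[ ^~ F \o Fk @ \oo --> 0%E ->
  sqdist leb `]c, d[ ^~ G \o Gk @ \oo --> 0%E ->
  (fun k => sqdist leb2 Om (tens (Fk k) (Gk k)) (tens F G)) @ \oo --> 0%E.
Proof.
move=> mFk mGk [mF iF] [mG iG] cF cG.
set U := (\int[leb]_(x in `]a, b[) (F x ^+ 2)%:E)%E.
set V := (\int[leb]_(y in `]c, d[) (G y ^+ 2)%:E)%E.
have fU : U \is a fin_num := @integrable_fin_num _ _ _ leb _ (measurable_itv _) _ iF.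
have fV : V \is a fin_num := @integrable_fin_num _ _ _ leb _ (measurable_itv _) _ iG.
set A := sqdist leb `]a, b[ ^~ F \o Fk; set B := sqdist leb `]c, d[ ^~ G \o Gk.
have cB : (fun k => 2%:E * B k + 2%:E * V)%E @ \oo --> (2%:E * V)%E.
  rewrite -[X in _ --> X]add0e; apply: cvgeD => //; last exact: cvg_cst.
  by rewrite -(mule0 2%:E); apply: cvgeZl.
have cAB : (fun k => 2%:E * A k * (2%:E * B k + 2%:E * V) + 2%:E * U * B k)%E
    @ \oo --> 0%E.
  rewrite -[X in _ --> X]adde0; apply: cvgeD => //.
    rewrite -(mul0e (2%:E * V)%E) -[X in _ --> (X * _)%E](mule0 2%:E).
    by apply: cvgeM => //; [rewrite mule_def_fin ?fin_numM|apply: cvgeZl].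
  by rewrite -(mule0 (2%:E * U)%E); apply: cvgeZl; rewrite ?fin_numM.
eapply (@squeeze_cvge _ _ _ _ (fun=> 0%E)); [|exact: cvg_cst|exact: cAB].
near=> k; rewrite sqdist_ge0 /=.
apply: (le_trans (sqdist_tens_le mF mG (mFk k) (mGk k))); apply: leeD2r.
rewrite -!muleA; apply: lee_wpmul2l => //; apply: lee_pmul => //.
- exact: sqdist_ge0.
- by apply: integral_ge0 => y _; rewrite lee_fin sqr_ge0.
- exact: (integral_sqr_le_sqdist leb (measurable_itv _) mG (mGk k)).
Unshelve. all: by end_near.
Qed.

End tensor_product.

Section sobolev.
Variable R : realType.
Implicit Types (a b c d al be : R) (f g u du v dv : R -> R).

Lemma derivable_lin al be f g x : derivable f x 1 -> derivable g x 1 ->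
  derivable (fun y => al * f y + be * g y) x 1.
Proof. by move=> df dg; apply: derivableD; apply: derivableZ. Qed.

Lemma derive1_lin al be f g x : derivable f x 1 -> derivable g x 1 ->
  derive1 (fun y => al * f y + be * g y) x = al * derive1 f x + be * derive1 g x.
Proof.
move=> df dg; rewrite !derive1E (deriveD (f := al \*: f)) ?deriveZ //;
  exact: derivableZ.
Qed.

Lemma continuous_lin (T : topologicalType) al be (f g : T -> R) :
  continuous f -> continuous g -> continuous (fun y => al * f y + be * g y).
Proof.
move=> cf cg x.
rewrite (_ : (fun y => _) = (fun y => al * f y) + (fun y => be * g y)) //.
apply: continuousD.
- exact: (@continuousZ _ _ _ (cst al) f x (cvg_cst _) (cf x)).
- exact: (@continuousZ _ _ _ (cst be) g x (cvg_cst _) (cg x)).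
Qed.

Lemma test1_lin a b al be f g : test1 a b f -> test1 a b g ->
  test1 a b (fun y => al * f y + be * g y).
Proof.
move=> [df [cf [cdf [e1 e10 s1]]]] [dg [cg [cdg [e2 e20 s2]]]].
split; first by move=> x; exact: derivable_lin.
split; first exact: continuous_lin.
split.
  have -> : derive1 (fun y => al * f y + be * g y) =
            (fun y => al * derive1 f y + be * derive1 g y).
    by apply/funext => x; exact: derive1_lin.
  exact: continuous_lin.
exists (Num.min e1 e2); first by rewrite lt_min e10.
have m1 : Num.min e1 e2 <= e1 by rewrite ge_min lexx.
have m2 : Num.min e1 e2 <= e2 by rewrite ge_min lexx orbT.
move=> x hx; rewrite s1 ?s2 ?mulr0 ?addr0 // => /andP[h1 h2];
  by apply: hx; apply/andP; split; lra.
Qed.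

Lemma measurable_test1 a b f : test1 a b f -> measurable_fun `]a, b[ f.
Proof. by move=> [_ [cf _]]; exact: measurable_funS (continuous_measurable_fun cf). Qed.

Lemma measurable_test1_derive a b f : test1 a b f -> measurable_fun `]a, b[ (derive1 f).
Proof. by move=> [_ [_ [cf _]]]; exact: measurable_funS (continuous_measurable_fun cf). Qed.

Lemma square_integrable_lin a b al be u v : L2_1 a b u -> L2_1 a b v ->
  L2_1 a b (fun x => al * u x + be * v x).
Proof.
move=> hu hv.
have mI := measurable_itvR `]a, b[.
exact: (square_integrableD (mu := @leb R) mI
  (square_integrableZ mI al hu) (square_integrableZ mI be hv)).
Qed.

Lemma H10_1_lin a b al be u du v dv : H10_1 a b u du -> H10_1 a b v dv ->
  H10_1 a b (fun x => al * u x + be * v x) (fun x => al * du x + be * dv x).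
Proof.
move=> [Lu [Ldu [phi [tphi [cu cdu]]]]] [Lv [Ldv [psi [tpsi [cv cdv]]]]].
split; first exact: square_integrable_lin.
split; first exact: square_integrable_lin.
exists (fun k y => al * phi k y + be * psi k y); split.
  by move=> k; exact: test1_lin.
split.
  by apply: (cvg_sqdist_lin (measurable_itvR _) al be _ _ Lu.1 Lv.1) => // k;
    exact: measurable_test1.
have e k : derive1 (fun y => al * phi k y + be * psi k y) =
    (fun y => al * derive1 (phi k) y + be * derive1 (psi k) y).
  by apply/funext => x; apply: derive1_lin; [case: (tphi k)|case: (tpsi k)].
under eq_fun => k do rewrite e.
by apply: (cvg_sqdist_lin (measurable_itvR _) al be _ _ Ldu.1 Ldv.1) => // k;
  exact: measurable_test1_derive.
Qed.

Lemma H10_1Z a b l u du : H10_1 a b u du ->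
  H10_1 a b (fun x => l * u x) (fun x => l * du x).
Proof.
move=> hu; have := H10_1_lin l 0 hu hu.
by congr H10_1; apply/funext => x; rewrite mul0r addr0.
Qed.

Lemma continuous_tens f g : continuous f -> continuous g -> continuous (tens f g).
Proof.
move=> cf cg p; apply: (@continuousM _ _ (f \o fst) (g \o snd)).
- by apply: continuous_comp; [exact: cvg_fst|exact: cf].
- by apply: continuous_comp; [exact: cvg_snd|exact: cg].
Qed.

Lemma dx_tens f g : (forall x, derivable f x 1) -> dx (tens f g) = tens (derive1 f) g.
Proof. by move=> df; apply/funext => p; rewrite /dx /tens /= derive1Mr. Qed.

Lemma dy_tens f g : (forall y, derivable g y 1) -> dy (tens f g) = tens f (derive1 g).
Proof. by move=> dg; apply/funext => p; rewrite /dy /tens /= derive1Ml. Qed.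

Lemma test2_tens a b c d f g : test1 a b f -> test1 c d g -> test2 a b c d (tens f g).
Proof.
move=> [df [cf [cdf [e1 e10 s1]]]] [dg [cg [cdg [e2 e20 s2]]]].
split.
  move=> p; rewrite [X in derivable X](_ : _ = f * cst (g p.2)) //.
  by apply: derivableM => //; exact: derivable_cst.
split.
  move=> p; rewrite [X in derivable X](_ : _ = cst (f p.1) * g) //.
  by apply: derivableM => //; exact: derivable_cst.
split; first exact: continuous_tens.
split; first by rewrite dx_tens //; exact: continuous_tens.
split; first by rewrite dy_tens //; exact: continuous_tens.
exists (Num.min e1 e2); first by rewrite lt_min e10.
have m1 : Num.min e1 e2 <= e1 by rewrite ge_min lexx.
have m2 : Num.min e1 e2 <= e2 by rewrite ge_min lexx orbT.
move=> p hp; rewrite /tens.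
have [h1|h1] := boolP (a + Num.min e1 e2 <= p.1 <= b - Num.min e1 e2); last first.
  rewrite s1 ?mul0r // => /andP[h3 h4]; move/negP: h1; apply.
  by apply/andP; split; lra.
have [h2|h2] := boolP (c + Num.min e1 e2 <= p.2 <= d - Num.min e1 e2).
  by exfalso; apply: hp; split.
rewrite s2 ?mulr0 // => /andP[h3 h4]; move/negP: h2; apply.
by apply/andP; split; lra.
Qed.

Lemma H10_2_tens a b c d r dr s ds : H10_1 a b r dr -> H10_1 c d s ds ->
  H10_2 a b c d (tens r s) (gtens r dr s ds).
Proof.
move=> [Lr [Ldr [phi [tphi [cr cdr]]]]] [Ls [Lds [psi [tpsi [cs cds]]]]].
split; first exact: square_integrable_tens.
split; first exact: square_integrable_tens.
split; first exact: square_integrable_tens.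
exists (fun k => tens (phi k) (psi k)).
split; first by move=> k; exact: test2_tens.
split; first by apply: cvg_sqdist_tens => // k; exact: measurable_test1.
split.
  have ex k : dx (tens (phi k) (psi k)) = tens (derive1 (phi k)) (psi k).
    by apply: dx_tens; case: (tphi k).
  under eq_fun => k do rewrite ex.
  by apply: cvg_sqdist_tens => // k; [exact: measurable_test1_derive|exact: measurable_test1].
have ey k : dy (tens (phi k) (psi k)) = tens (phi k) (derive1 (psi k)).
  by apply: dy_tens; case: (tpsi k).
under eq_fun => k do rewrite ey.
by apply: cvg_sqdist_tens => // k; [exact: measurable_test1|exact: measurable_test1_derive].
Qed.

End sobolev.

Definition gscale (R : realType) (k : R) (G : grad R) : grad R :=
  (fun p => k * G.1 p, fun p => k * G.2 p).

Definition L2_grad (R : realType) (a b c d : R) (G : grad R) :=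
  L2_2 a b c d G.1 /\ L2_2 a b c d G.2.

Section dirichlet_form.
Variables (R : realType) (a b c d : R).
Local Notation L2_grad := (L2_grad a b c d).
Local Notation dirichlet := (dirichlet a b c d).
Implicit Types G H K : grad R.

Lemma I2E (u : R * R -> R) : I2 a b c d u = Rintegral (@leb2 R) (Om a b c d) u.
Proof. by []. Qed.

Lemma L2_gradD G H : L2_grad G -> L2_grad H -> L2_grad (gadd G H).
Proof.
by move=> [G1 G2] [H1 H2]; split; apply: (square_integrableD (measurable_Om a b c d)).
Qed.

Lemma L2_gradZ k G : L2_grad G -> L2_grad (gscale k G).
Proof. by move=> [G1 G2]; split; apply: (square_integrableZ (measurable_Om a b c d)). Qed.

Lemma L2_gradB G H : L2_grad G -> L2_grad H -> L2_grad (gsub G H).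
Proof.
by move=> [G1 G2] [H1 H2]; split; apply: (square_integrableB (measurable_Om a b c d)).
Qed.

Lemma L2_grad_gtens r dr s ds : H10_1 a b r dr -> H10_1 c d s ds ->
  L2_grad (gtens r dr s ds).
Proof.
by move=> [Lr [Ldr _]] [Ls [Lds _]]; split; apply: square_integrable_tens.
Qed.

Lemma integrable_dot G K : L2_grad G -> L2_grad K ->
  (@leb2 R).-integrable (Om a b c d) (EFin \o (fun p => G.1 p * K.1 p + G.2 p * K.2 p)).
Proof.
move=> [G1 G2] [K1 K2]; have mOm := measurable_Om a b c d.
apply: (eq_integrable mOm (fun p => (G.1 p * K.1 p)%:E + (G.2 p * K.2 p)%:E)%E).
  by move=> p _; rewrite /= EFinD.
by apply: (integrableD mOm); exact: (square_integrable_integrableM mOm).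
Qed.

Lemma dirichletC G H : dirichlet G H = dirichlet H G.
Proof. by congr I2; apply/funext => p; rewrite mulrC [G.2 p * _]mulrC. Qed.

Lemma dirichletZl k G K : L2_grad G -> L2_grad K ->
  dirichlet (gscale k G) K = k * dirichlet G K.
Proof.
move=> hG hK; rewrite /dirichlet !I2E -RintegralZl; last exact: integrable_dot.
  by apply: eq_Rintegral => p _ /=; ring.
exact: measurable_Om.
Qed.

Lemma dirichletDl G H K : L2_grad G -> L2_grad H -> L2_grad K ->
  dirichlet (gadd G H) K = dirichlet G K + dirichlet H K.
Proof.
move=> hG hH hK; rewrite /dirichlet !I2E -RintegralD; try exact: integrable_dot.
  by apply: eq_Rintegral => p _ /=; ring.
exact: measurable_Om.
Qed.

Lemma dirichletBl G H K : L2_grad G -> L2_grad H -> L2_grad K ->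
  dirichlet (gsub G H) K = dirichlet G K - dirichlet H K.
Proof.
move=> hG hH hK; rewrite /dirichlet !I2E -RintegralB; try exact: integrable_dot.
  by apply: eq_Rintegral => p _ /=; ring.
exact: measurable_Om.
Qed.

Lemma dirichletZr k G K : L2_grad G -> L2_grad K ->
  dirichlet K (gscale k G) = k * dirichlet K G.
Proof. by move=> hG hK; rewrite dirichletC dirichletZl // dirichletC. Qed.

Lemma dirichletDr G H K : L2_grad G -> L2_grad H -> L2_grad K ->
  dirichlet K (gadd G H) = dirichlet K G + dirichlet K H.
Proof. by move=> *; rewrite dirichletC dirichletDl // !(dirichletC K). Qed.

Lemma dnorm2Z k G : L2_grad G -> dnorm2 a b c d (gscale k G) = k ^+ 2 * dnorm2 a b c d G.
Proof.
by move=> hG; rewrite /dnorm2 dirichletZl ?dirichletZr ?mulrA -?expr2 //; exact: L2_gradZ.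
Qed.

Lemma dnorm2_ge0 G : 0 <= dnorm2 a b c d G.
Proof. by apply: Rintegral_ge0 => p _; rewrite -!expr2 addr_ge0 ?sqr_ge0. Qed.

End dirichlet_form.

Arguments dirichletC {R a b c d} G H.

Section quadratic_inequalities.
Variable R : realFieldType.

Lemma coef2_ge0_of_even_quartic (Phi M : R) : 0 <= M ->
  (forall t, 0 <= 2 * t ^+ 2 * Phi + t ^+ 4 * M) -> 0 <= Phi.
Proof.
move=> M0 h; rewrite leNgt; apply/negP => Phi0.
pose t := - Phi / (M - Phi).
have tMPhi : t * (M - Phi) = - Phi by rewrite /t divfK // gt_eqF //; lra.
have t0 : 0 < t by rewrite /t divr_gt0 //; lra.
have t1 : t <= 1 by nra.
(* [t] is chosen so that [2 Phi + t^2 M <= 2 Phi + t M = (1 + t) Phi < 0]. *)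
have neg : 2 * Phi + t ^+ 2 * M < 0 by rewrite expr2; nra.
have := h t; rewrite (_ : 2 * t ^+ 2 * Phi + t ^+ 4 * M = t ^+ 2 * (2 * Phi + t ^+ 2 * M)).
  by rewrite pmulr_rge0 ?exprn_gt0 // leNgt neg.
by rewrite (_ : 4 = 2 + 2)%N // exprD; ring.
Qed.

Lemma quadratic_ge0_iff (A B E : R) : 0 <= A -> 0 <= B ->
  (forall l, 0 <= 2^-1 * (l ^+ 2 * A) + 2^-1 * B + l * E) <-> E ^+ 2 <= A * B.
Proof.
move=> A0 B0; split=> [h|hE l]; last first.
  have lE : (l * E) ^+ 2 <= l ^+ 2 * A * B.
    by rewrite exprMn -mulrA ler_wpM2l ?sqr_ge0.
  have lA : 0 <= l ^+ 2 * A by rewrite mulr_ge0 ?sqr_ge0.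
  rewrite leNgt; apply/negP => neg; have := sqr_ge0 (l ^+ 2 * A - B).
  rewrite expr2 in lE; nra.
have [Ap|] := ltP 0 A.
  have := h (- E / A); rewrite -subr_ge0.
  have -> : 2^-1 * ((- E / A) ^+ 2 * A) + 2^-1 * B + - E / A * E =
            (A * B - E ^+ 2) / (2 * A) by field; rewrite gt_eqF.
  by rewrite subr0 pmulr_lge0 ?subr_ge0 // invr_gt0 mulr_gt0.
rewrite le_eqVlt ltNge A0 orbF => /eqP A0'.
suff -> : E = 0 by rewrite A0' expr2 !mul0r.
apply/eqP/negP => /negP E0; have := h (- (B + 1) / E).
rewrite A0' mulr0 mulr0 add0r divfK //; lra.
Qed.

End quadratic_inequalities.

Definition energy (R : realType) (a b c d : R) (H W : grad R) : R :=
  2^-1 * dnorm2 a b c d W - dirichlet a b c d H W.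

Definition curve (R : realType) (P Y Z : grad R) (t : R) : grad R :=
  gadd (gadd P (gscale t Y)) (gscale (t ^+ 2) Z).

Section energy.
Variables (R : realType) (a b c d : R).
Local Notation L2_grad := (L2_grad a b c d).
Local Notation dirichlet := (dirichlet a b c d).
Local Notation dnorm2 := (dnorm2 a b c d).
Local Notation energy := (energy a b c d).
Hint Resolve L2_gradD L2_gradZ : core.

Lemma energy_curve_even (H P Y Z : grad R) (t : R) :
  L2_grad H -> L2_grad P -> L2_grad Y -> L2_grad Z ->
  energy H (curve P Y Z t) + energy H (curve P Y Z (- t)) - 2 * energy H P =
  2 * t ^+ 2 * (2^-1 * dnorm2 Y + dirichlet P Z - dirichlet H Z) + t ^+ 4 * dnorm2 Z.
Proof.
move=> hH hP hY hZ; rewrite /energy /dnorm2 /curve.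
rewrite !dirichletDl ?dirichletZl ?dirichletDr ?dirichletZr //; try by auto.
rewrite (dirichletC Y P) (dirichletC Z P) (dirichletC Z Y).
by field.
Qed.

Lemma dirichlet_gtens_swap (r dr s ds r' dr' s' ds' : R -> R) :
  dirichlet (gtens r dr s' ds') (gtens r' dr' s ds) =
  dirichlet (gtens r' dr' s' ds') (gtens r dr s ds).
Proof. by congr I2; apply/funext => p; rewrite /= /tens; ring. Qed.

Lemma gtens_curve (r dr s ds r' dr' s' ds' : R -> R) (t : R) :
  gtens (fun x => 1 * r x + t * r' x) (fun x => 1 * dr x + t * dr' x)
        (fun y => 1 * s y + t * s' y) (fun y => 1 * ds y + t * ds' y) =
  curve (gtens r dr s ds) (gadd (gtens r' dr' s ds) (gtens r dr s' ds'))
        (gtens r' dr' s' ds') t.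
Proof. by congr pair; apply/funext => p; rewrite /= /tens /=; ring. Qed.

Lemma gtensZl (l : R) (r dr s ds : R -> R) :
  gtens (fun x => l * r x) (fun x => l * dr x) s ds = gscale l (gtens r dr s ds).
Proof. by congr pair; apply/funext => p; rewrite /= /tens mulrA. Qed.

End energy.

Section greedy.
Variables (R : realType) (a b c d : R) (f : R * R -> R) (G : grad R).
Variables (rr drr ss dss : nat -> R -> R).
Hypothesis LG : L2_grad a b c d G.
Hypothesis weak_solution : forall v Gv, H10_2 a b c d v Gv ->
  dirichlet a b c d G Gv = I2 a b c d (fun p => f p * v p).
Hypothesis iterates_H10 : forall k, (1 <= k)%N ->
  H10_1 a b (rr k) (drr k) /\ H10_1 c d (ss k) (dss k).

Local Notation L2_grad := (L2_grad a b c d).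
Local Notation dirichlet := (dirichlet a b c d).
Local Notation dnorm2 := (dnorm2 a b c d).
Local Notation T k := (gtens (rr k) (drr k) (ss k) (dss k)).
Local Notation grad_gn := (grad_gn G rr drr ss dss).
Local Notation Jn := (Jn a b c d f rr drr ss dss).
Local Notation fpair := (fpair a b c d f rr drr ss dss).

Lemma L2_grad_iterate k : (1 <= k)%N -> L2_grad (T k).
Proof. by move=> /iterates_H10[hr hs]; exact: L2_grad_gtens. Qed.

Lemma L2_grad_gn m : L2_grad (grad_gn m).
Proof.
have mOm := measurable_Om a b c d.
have [LG1 LG2] := LG.
have LT k : k \in index_iota 1 m.+1 -> L2_grad (T k).
  by rewrite mem_index_iota => /andP[k1 _]; exact: L2_grad_iterate.
by split; apply: (square_integrableB mOm) => //;
  apply: (square_integrable_sum mOm) => k /LT[].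
Qed.

Lemma dirichlet_grad_gn m K : L2_grad K ->
  dirichlet (grad_gn m) K = dirichlet G K - \sum_(1 <= k < m.+1) dirichlet (T k) K.
Proof.
move=> hK; have mOm := measurable_Om a b c d.
have iT : {in index_iota 1 m.+1, forall k, (@leb2 R).-integrable (Om a b c d)
    (EFin \o (fun p => (T k).1 p * K.1 p + (T k).2 p * K.2 p))}.
  move=> k; rewrite mem_index_iota => /andP[k1 _].
  exact: integrable_dot (L2_grad_iterate k1) hK.
rewrite /dirichlet !I2E -Rintegral_sum // -RintegralB //; last 2 first.
- exact: integrable_dot.
- exact: integrable_sum_EFin.
apply: eq_Rintegral => p _ /=.
by rewrite !mulrBl !big_distrl big_split /=; ring.
Qed.

Lemma fpair_weak m v Gv : H10_2 a b c d v Gv -> fpair m v Gv = dirichlet (grad_gn m) Gv.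
Proof.
move=> hv; have [_ [L1 [L2 _]]] := hv.
by rewrite /fpair -(weak_solution hv) dirichlet_grad_gn.
Qed.

Lemma grad_gnS m : grad_gn m.+1 = gsub (grad_gn m) (T m.+1).
Proof. by congr pair; apply/funext => p; rewrite /= big_nat_recr //=; ring. Qed.

Lemma Jn_energy n r dr s ds : H10_1 a b r dr -> H10_1 c d s ds ->
  Jn n r dr s ds = energy a b c d (grad_gn n.-1) (gtens r dr s ds).
Proof. by move=> hr hs; rewrite /Jn fpair_weak //; exact: H10_2_tens. Qed.

Lemma greedy_second_order_ge0 n : (1 <= n)%N ->
  (forall r dr s ds, H10_1 a b r dr -> H10_1 c d s ds ->
     Jn n (rr n) (drr n) (ss n) (dss n) <= Jn n r dr s ds) ->
  forall r dr s ds, H10_1 a b r dr -> H10_1 c d s ds ->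
  0 <= 2^-1 * dnorm2 (gadd (gtens r dr (ss n) (dss n)) (gtens (rr n) (drr n) s ds))
       + dirichlet (T n) (gtens r dr s ds) - fpair n.-1 (tens r s) (gtens r dr s ds).
Proof.
move=> n1 hmin r dr s ds hr hs; have [hrn hsn] := iterates_H10 n1.
set Y := gadd _ _; set Z := gtens r dr s ds.
have LY : L2_grad Y by apply: L2_gradD; exact: L2_grad_gtens.
have LZ : L2_grad Z by exact: L2_grad_gtens.
rewrite fpair_weak; last exact: H10_2_tens.
apply: (coef2_ge0_of_even_quartic (dnorm2_ge0 _ _ _ _ Z)) => t.
have Jt u : Jn n (rr n) (drr n) (ss n) (dss n) <=
            energy a b c d (grad_gn n.-1) (curve (T n) Y Z u).
  by rewrite -gtens_curve -Jn_energy; [apply: hmin| |]; exact: H10_1_lin.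
have := energy_curve_even t (L2_grad_gn n.-1) (L2_grad_iterate n1) LY LZ.
by have := Jt t; have := Jt (- t); rewrite Jn_energy //; lra.
Qed.

Lemma greedy_second_order_eq n r dr s ds : (1 <= n)%N ->
  H10_1 a b r dr -> H10_1 c d s ds ->
  2^-1 * dnorm2 (gadd (gtens r dr (ss n) (dss n)) (gtens (rr n) (drr n) s ds))
    + dirichlet (T n) (gtens r dr s ds) - fpair n.-1 (tens r s) (gtens r dr s ds) =
  2^-1 * dnorm2 (gtens r dr (ss n) (dss n)) + 2^-1 * dnorm2 (gtens (rr n) (drr n) s ds)
    + dirichlet (gsub (T n) (grad_gn n)) (gtens r dr s ds).
Proof.
move=> n1 hr hs; have [hrn hsn] := iterates_H10 n1.
have LY1 := L2_grad_gtens hr hsn; have LY2 := L2_grad_gtens hrn hs.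
have LZ := L2_grad_gtens hr hs; have LP := L2_grad_iterate n1.
have Lg := L2_grad_gn n.-1.
have gnE := grad_gnS n.-1; rewrite prednK // in gnE.
rewrite fpair_weak; last exact: H10_2_tens.
rewrite gnE /dnorm2 !dirichletDl ?dirichletDr ?dirichletBl //;
  try solve [exact: L2_gradD | exact: L2_gradB].
rewrite (dirichletC (gtens (rr n) _ _ _)) dirichlet_gtens_swap.
by field.
Qed.

Lemma greedy_second_order_iff n : (1 <= n)%N ->
  (forall r dr s ds, H10_1 a b r dr -> H10_1 c d s ds ->
    0 <= 2^-1 * dnorm2 (gadd (gtens r dr (ss n) (dss n)) (gtens (rr n) (drr n) s ds))
         + dirichlet (T n) (gtens r dr s ds) - fpair n.-1 (tens r s) (gtens r dr s ds)) <->
  (forall r dr s ds, H10_1 a b r dr -> H10_1 c d s ds ->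
    dirichlet (gsub (T n) (grad_gn n)) (gtens r dr s ds) ^+ 2
    <= dnorm2 (gtens r dr (ss n) (dss n)) * dnorm2 (gtens (rr n) (drr n) s ds)).
Proof.
move=> n1; have [hrn hsn] := iterates_H10 n1.
have LE := L2_gradB (L2_grad_iterate n1) (L2_grad_gn n).
split=> h r dr s ds hr hs.
  apply: (quadratic_ge0_iff _ (dnorm2_ge0 _ _ _ _ _) (dnorm2_ge0 _ _ _ _ _)).1 => l.
  have := h _ _ _ _ (H10_1Z l hr) hs.
  rewrite greedy_second_order_eq //; last exact: H10_1Z.
  by rewrite !gtensZl dnorm2Z ?dirichletZr //; exact: L2_grad_gtens.
rewrite greedy_second_order_eq //.
have := (quadratic_ge0_iff _ (dnorm2_ge0 _ _ _ _ _) (dnorm2_ge0 _ _ _ _ _)).2 (h _ _ _ _ hr hs) 1.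
by rewrite expr1n !mul1r.
Qed.

End greedy.

Theorem lemma5 (R : realType) (a b c d : R) (f g : R * R -> R) (G : grad R)
  (rr drr ss dss : nat -> R -> R) (n : nat) :
  a < b -> c < d ->
  L2_2 a b c d f ->
  H10_2 a b c d g G ->
  (forall v Gv, H10_2 a b c d v Gv ->
     dirichlet a b c d G Gv = I2 a b c d (fun p => f p * v p)) ->
  (forall k, (1 <= k)%N ->
     H10_1 a b (rr k) (drr k) /\ H10_1 c d (ss k) (dss k) /\
     forall r dr s ds, H10_1 a b r dr -> H10_1 c d s ds ->
       Jn a b c d f rr drr ss dss k (rr k) (drr k) (ss k) (dss k)
       <= Jn a b c d f rr drr ss dss k r dr s ds) ->
  (1 <= n)%N ->
  let cond1 := forall r dr s ds, H10_1 a b r dr -> H10_1 c d s ds ->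
    0 <= 2^-1 * dnorm2 a b c d
                  (gadd (gtens r dr (ss n) (dss n)) (gtens (rr n) (drr n) s ds))
         + dirichlet a b c d (gtens (rr n) (drr n) (ss n) (dss n)) (gtens r dr s ds)
         - fpair a b c d f rr drr ss dss n.-1 (tens r s) (gtens r dr s ds) in
  let cond2 := forall r dr s ds, H10_1 a b r dr -> H10_1 c d s ds ->
    (dirichlet a b c d
       (gsub (gtens (rr n) (drr n) (ss n) (dss n)) (grad_gn G rr drr ss dss n))
       (gtens r dr s ds)) ^+ 2
    <= dnorm2 a b c d (gtens r dr (ss n) (dss n))
       * dnorm2 a b c d (gtens (rr n) (drr n) s ds) in
  cond1 /\ (cond1 <-> cond2).
Proof.
move=> _ _ _ [_ [LG1 [LG2 _]]] weak hmin n1 cond1 cond2.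
have LG : L2_grad a b c d G := conj LG1 LG2.
have iterates k : (1 <= k)%N -> H10_1 a b (rr k) (drr k) /\ H10_1 c d (ss k) (dss k).
  by move=> /hmin[hr [hs _]].
split; first exact: (greedy_second_order_ge0 LG weak iterates n1 (hmin n n1).2.2).
exact: (greedy_second_order_iff LG weak iterates n1).
Qed.
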